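(* Let $f\colon X\to Y$ be a continuous map between path-connected spaces such that $f_*\colon\pi_1(X)\to\pi_1(Y)$ is an isomorphism. Then $\mathsf{TC}^{\mathcal D}(X)\le\mathsf{TC}^{\mathcal D}(Y)$. In particular $\mathsf{TC}^{\mathcal D}$ is a homotopy invariant.
   Context: For a path-connected space $Z$ with $\pi=\pi_1(Z)$, $\mathsf{TC}^{\mathcal D}(Z)$ is the least $k$ such that $Z\times Z=U_0\cup\dots\cup U_k$ with $U_i$ open and such that for every $i$ and every basepoint $u\in U_i$ the homomorphism $\pi_1(U_i,u)\to\pi_1(Z\times Z,u)\cong\pi\times\pi$ induced by inclusion takes values in a subgroup conjugate to the diagonal $\Delta\subset\pi\times\pi$. *)

From Stdlib Require Import Reals Lra.
Open Scope R_scope.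

Record space := Space {
  carrier :> Type;
  open : (carrier -> Prop) -> Prop;
  open_full : open (fun _ => True);
  open_inter : forall U V, open U -> open V -> open (fun x => U x /\ V x);
  open_union : forall F : (carrier -> Prop) -> Prop,
      (forall U, F U -> open U) -> open (fun x => exists U, F U /\ U x)
}.
Arguments open {s} _.

Definition cont (X Y : space) (f : X -> Y) : Prop :=
  forall V : Y -> Prop, open V -> open (fun x => V (f x)).

Definition R_open (U : R -> Prop) : Prop :=
  forall x, U x -> exists e, 0 < e /\ forall y, Rabs (y - x) < e -> U y.

Lemma R_open_full : R_open (fun _ => True).
Proof. intros x _; exists 1; split; [lra| auto]. Qed.

Lemma R_open_inter U V : R_open U -> R_open V -> R_open (fun x => U x /\ V x).
Proof.
  intros HU HV x [Ux Vx].
  destruct (HU x Ux) as [e1 [He1 H1]]; destruct (HV x Vx) as [e2 [He2 H2]].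
  exists (Rmin e1 e2); split; [now apply Rmin_pos|].
  intros y Hy; split; [apply H1|apply H2];
    eapply Rlt_le_trans; eauto; [apply Rmin_l|apply Rmin_r].
Qed.

Lemma R_open_union (F : (R -> Prop) -> Prop) :
  (forall U, F U -> R_open U) -> R_open (fun x => exists U, F U /\ U x).
Proof.
  intros HF x [U [FU Ux]].
  destruct (HF U FU x Ux) as [e [He H]].
  exists e; split; auto. intros y Hy; exists U; auto.
Qed.

Definition R_space : space := Space R R_open R_open_full R_open_inter R_open_union.

Section Sub.
Variable (X : space) (P : X -> Prop).
Definition sub_open (U : {x : X | P x} -> Prop) : Prop :=
  exists V : X -> Prop, open V /\ forall x, U x <-> V (proj1_sig x).

Lemma sub_open_full : sub_open (fun _ => True).
Proof. exists (fun _ => True); split; [apply open_full| tauto]. Qed.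

Lemma sub_open_inter U V : sub_open U -> sub_open V -> sub_open (fun x => U x /\ V x).
Proof.
  intros [A [HA EA]] [B [HB EB]]; exists (fun x => A x /\ B x); split.
  - now apply open_inter.
  - intros x; rewrite EA, EB; tauto.
Qed.

Lemma sub_open_union (F : ({x : X | P x} -> Prop) -> Prop) :
  (forall U, F U -> sub_open U) -> sub_open (fun x => exists U, F U /\ U x).
Proof.
  intros HF.
  exists (fun y => exists W, (exists U, F U /\ open W /\
             forall x, U x <-> W (proj1_sig x)) /\ W y); split.
  - apply open_union. intros W [U [_ [HW _]]]; exact HW.
  - intros x; split.
    + intros [U [FU Ux]]. destruct (HF U FU) as [W [HW EW]].
      exists W; split; [exists U; auto| now apply EW].
    + intros [W [[U [FU [_ EW]]] Wx]]. exists U; split; auto; now apply EW.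
Qed.

Definition sub_space : space :=
  Space {x : X | P x} sub_open sub_open_full sub_open_inter sub_open_union.
End Sub.

Section Prod.
Variable (X Y : space).
Definition prod_open (U : X * Y -> Prop) : Prop :=
  forall p, U p -> exists (A : X -> Prop) (B : Y -> Prop),
    open A /\ open B /\ A (fst p) /\ B (snd p) /\
    forall a b, A a -> B b -> U (a, b).

Lemma prod_open_full : prod_open (fun _ => True).
Proof.
  intros p _; exists (fun _ => True), (fun _ => True);
    repeat split; try apply open_full; auto.
Qed.

Lemma prod_open_inter U V : prod_open U -> prod_open V -> prod_open (fun x => U x /\ V x).
Proof.
  intros HU HV p [Up Vp].
  destruct (HU p Up) as [A [B [HA [HB [Ap [Bp H1]]]]]].
  destruct (HV p Vp) as [A' [B' [HA' [HB' [Ap' [Bp' H2]]]]]].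
  exists (fun a => A a /\ A' a), (fun b => B b /\ B' b).
  repeat split; try apply open_inter; auto; intuition.
Qed.

Lemma prod_open_union (F : (X * Y -> Prop) -> Prop) :
  (forall U, F U -> prod_open U) -> prod_open (fun x => exists U, F U /\ U x).
Proof.
  intros HF p [U [FU Up]].
  destruct (HF U FU p Up) as [A [B [HA [HB [Ap [Bp H]]]]]].
  exists A, B; repeat split; auto. intros a b Aa Bb; exists U; auto.
Qed.

Definition prod_space : space :=
  Space (X * Y) prod_open prod_open_full prod_open_inter prod_open_union.
End Prod.

Definition Iu : space := sub_space R_space (fun t => 0 <= t <= 1).

(** Paths are represented by functions R -> X whose restriction to [0,1]
    is continuous; only their values on [0,1] matter. *)
Definition is_path (X : space) (p : R -> X) : Prop :=
  cont Iu X (fun t => p (proj1_sig t)).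

Definition is_loop (X : space) (x : X) (p : R -> X) : Prop :=
  is_path X p /\ p 0 = x /\ p 1 = x.

Definition path_homotopic (X : space) (p q : R -> X) : Prop :=
  exists H : R -> R -> X,
    cont (prod_space Iu Iu) X
         (fun st => H (proj1_sig (fst st)) (proj1_sig (snd st))) /\
    (forall s, 0 <= s <= 1 -> H s 0 = p s /\ H s 1 = q s) /\
    (forall t, 0 <= t <= 1 -> H 0 t = p 0 /\ H 1 t = p 1).

Definition concat {X : Type} (p q : R -> X) : R -> X :=
  fun t => if Rle_dec t (1/2) then p (2 * t) else q (2 * t - 1).
Definition rev_path {X : Type} (p : R -> X) : R -> X := fun t => p (1 - t).

Definition path_connected (X : space) : Prop :=
  inhabited X /\
  forall x y : X, exists p, is_path X p /\ p 0 = x /\ p 1 = y.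

(** f_* : pi_1(X, x0) -> pi_1(Y, f x0) is a bijection (hence an isomorphism,
    being a homomorphism). *)
Definition pi1_iso (X Y : space) (f : X -> Y) (x0 : X) : Prop :=
  (forall l m, is_loop X x0 l -> is_loop X x0 m ->
     path_homotopic Y (fun t => f (l t)) (fun t => f (m t)) ->
     path_homotopic X l m) /\
  (forall l', is_loop Y (f x0) l' ->
     exists l, is_loop X x0 l /\ path_homotopic Y (fun t => f (l t)) l').

(** U (subset of Z x Z) satisfies the D-condition: for every u in U, the image
    of pi_1(U,u) -> pi_1(Z x Z, u) lies in a subgroup conjugate to the
    diagonal, i.e. in g . Delta_z . g^{-1} for some z and some path g in Z x Z
    from u to (z,z), where Delta_z = classes of loops (d,d) with d a loop at z. *)
Definition D_set (Z : space) (U : prod_space Z Z -> Prop) : Prop :=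
  forall u, U u ->
    exists (z : Z) (g : R -> prod_space Z Z),
      is_path (prod_space Z Z) g /\ g 0 = u /\ g 1 = (z, z) /\
      forall l : R -> prod_space Z Z,
        is_loop (prod_space Z Z) u l ->
        (forall t, 0 <= t <= 1 -> U (l t)) ->
        exists d : R -> Z, is_loop Z z d /\
          path_homotopic (prod_space Z Z) l
            (concat g (concat (fun t => (d t, d t)) (rev_path g))).

Definition TCD_le (Z : space) (k : nat) : Prop :=
  exists U : nat -> (prod_space Z Z -> Prop),
    (forall i, (i <= k)%nat -> open (U i) /\ D_set Z (U i)) /\
    (forall p, exists i, (i <= k)%nat /\ U i p).

Definition TCD (Z : space) (n : nat) : Prop :=
  TCD_le Z n /\ forall k, (k < n)%nat -> ~ TCD_le Z k.

Definition homotopic_maps (X Y : space) (f g : X -> Y) : Prop :=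
  exists H : X -> R -> Y,
    cont (prod_space X Iu) Y (fun p => H (fst p) (proj1_sig (snd p))) /\
    forall x, H x 0 = f x /\ H x 1 = g x.

Definition homotopy_equivalent (X Y : space) : Prop :=
  exists (f : X -> Y) (g : Y -> X), cont X Y f /\ cont Y X g /\
    homotopic_maps X X (fun x => g (f x)) (fun x => x) /\
    homotopic_maps Y Y (fun y => f (g y)) (fun y => y).

(* Pull a cover of [Y x Y] by D-sets back along [f x f]: the open cover of [X x X] has the same
   size, so it suffices that preimages of D-sets are D-sets.  Since [X] is path connected, [f_*]
   is bijective at every base point, not only at [x0].  Surjectivity lifts the conjugating path
   [g'] of [(f a, f b)] to a path [(a, g2)] with [f g2 ~ g'_2 g'_1^-1], and injectivity lifts the
   resulting conjugacy between the components of a loop.  A homotopy equivalence and its inverse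
   both induce bijections on all fundamental groups, which gives the inequality both ways. *)

From Stdlib Require Import Reals Lra Lia Wf_nat FunctionalExtensionality PropExtensionality Classical.
Open Scope R_scope.

Lemma open_ext (X : space) (U V : X -> Prop) : open U -> (forall x, U x <-> V x) -> open V.
Proof.
  intros HU E. assert (U = V) as <-; auto.
  extensionality x; apply propositional_extensionality; auto.
Qed.

Lemma open_local (X : space) (W : X -> Prop) :
  (forall x, W x -> exists O, open O /\ O x /\ forall y, O y -> W y) -> open W.
Proof.
  intros H.
  apply (open_ext X (fun x => exists U, (open U /\ forall y, U y -> W y) /\ U x)).
  - apply open_union. intros U [HU _]; exact HU.
  - intros x; split.
    + intros [U [[_ HU] Ux]]; auto.
    + intros Wx; destruct (H x Wx) as [O [HO [Ox HOW]]]; exists O; auto.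
Qed.

Lemma open_empty (X : space) : open (fun _ : X => False).
Proof.
  apply (open_ext X (fun x => exists U : X -> Prop, False /\ U x)).
  - apply open_union; tauto.
  - intros x; split; [intros [U [[] _]] | tauto].
Qed.

Lemma cont_comp (A B C : space) (f : A -> B) (g : B -> C) :
  cont A B f -> cont B C g -> cont A C (fun x => g (f x)).
Proof. intros Hf Hg V HV. apply (Hf _ (Hg _ HV)). Qed.

Lemma cont_const (A B : space) (c : B) : cont A B (fun _ => c).
Proof.
  intros V HV. destruct (classic (V c)) as [H|H].
  - apply (open_ext A (fun _ => True)); [apply open_full| tauto].
  - apply (open_ext A (fun _ => False)); [apply open_empty| tauto].
Qed.

Lemma cont_id (A : space) : cont A A (fun x => x).
Proof. intros V HV; exact HV. Qed.

Lemma cont_fst (A B : space) : cont (prod_space A B) A fst.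
Proof. intros V HV p Vp. exists V, (fun _ => True); repeat split; auto; apply open_full. Qed.

Lemma cont_snd (A B : space) : cont (prod_space A B) B snd.
Proof. intros V HV p Vp. exists (fun _ => True), V; repeat split; auto; apply open_full. Qed.

Lemma cont_pair (A B C : space) (f : A -> B) (g : A -> C) :
  cont A B f -> cont A C g -> cont A (prod_space B C) (fun x => (f x, g x)).
Proof.
  intros Hf Hg V HV. apply open_local. intros x Vx.
  destruct (HV _ Vx) as [P [Q [HP [HQ [Pf [Qg H]]]]]].
  exists (fun y => P (f y) /\ Q (g y)). split; [apply open_inter; auto|].
  split; auto. intros y [Py Qy]. apply (H _ _ Py Qy).
Qed.

Lemma open_box (A B : space) (P : A -> Prop) (Q : B -> Prop) :
  open P -> open Q -> open (s := prod_space A B) (fun p => P (fst p) /\ Q (snd p)).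
Proof. intros HP HQ p [Pp Qp]. exists P, Q; repeat split; auto. Qed.

Definition in01 (s : R) := 0 <= s <= 1.

Lemma Iu_open_ball (U : Iu -> Prop) x : open U -> U x ->
  exists e, 0 < e /\ forall y : Iu, Rabs (proj1_sig y - proj1_sig x) < e -> U y.
Proof.
  intros [V [HV E]] Ux. apply E in Ux. destruct (HV _ Ux) as [e [He H]].
  exists e; split; auto. intros y Hy; apply E; auto.
Qed.

Lemma Iu_ball_open (c d : R) : open (s := Iu) (fun x => Rabs (proj1_sig x - c) < d).
Proof.
  exists (fun y => Rabs (y - c) < d). split; [|tauto].
  intros y Hy. exists (d - Rabs (y - c)). split; [lra|].
  intros z Hz. pose proof (Rabs_triang (z - y) (y - c)).
  replace (z - y + (y - c)) with (z - c) in H by ring. lra.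
Qed.

Lemma Iu_lt_open (c : R) : open (s := Iu) (fun x => proj1_sig x < c).
Proof.
  exists (fun y => y < c). split; [|tauto].
  intros y Hy. exists (c - y). split; [lra|].
  intros z Hz. pose proof (Rle_abs (z - y)). lra.
Qed.

Lemma Iu_gt_open (c : R) : open (s := Iu) (fun x => c < proj1_sig x).
Proof.
  exists (fun y => c < y). split; [|tauto].
  intros y Hy. exists (y - c). split; [lra|].
  intros z Hz. pose proof (Rle_abs (y - z)). rewrite Rabs_minus_sym in Hz. lra.
Qed.

(** * Real functions continuous on the unit square *)

Definition rcont2 (phi : R -> R -> R) := forall s t, in01 s -> in01 t -> forall e, 0 < e ->
  exists d, 0 < d /\ forall s' t', in01 s' -> in01 t' -> Rabs (s' - s) < d ->
    Rabs (t' - t) < d -> Rabs (phi s' t' - phi s t) < e.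

Lemma rcont2_const c : rcont2 (fun _ _ => c).
Proof.
  intros s t _ _ e He; exists 1; split; [lra|]; intros.
  rewrite Rminus_diag, Rabs_R0; lra.
Qed.

Lemma rcont2_fst : rcont2 (fun s _ => s).
Proof. intros s t _ _ e He; exists e; split; auto. Qed.

Lemma rcont2_snd : rcont2 (fun _ t => t).
Proof. intros s t _ _ e He; exists e; split; auto. Qed.

Lemma rcont2_combine (op : R -> R -> R) f g :
  (forall a b e, 0 < e -> exists d, 0 < d /\
     forall a' b', Rabs (a' - a) < d -> Rabs (b' - b) < d -> Rabs (op a' b' - op a b) < e) ->
  rcont2 f -> rcont2 g -> rcont2 (fun s t => op (f s t) (g s t)).
Proof.
  intros Hop Hf Hg s t hs ht e He.
  destruct (Hop (f s t) (g s t) e He) as [d [Hd Hd']].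
  destruct (Hf s t hs ht d Hd) as [d1 [Hd1 H1]].
  destruct (Hg s t hs ht d Hd) as [d2 [Hd2 H2]].
  exists (Rmin d1 d2); split; [apply Rmin_pos; auto|].
  intros s' t' hs' ht' Hs Ht. pose proof (Rmin_l d1 d2); pose proof (Rmin_r d1 d2).
  apply Hd'; [apply H1|apply H2]; auto; lra.
Qed.

Lemma Rplus_cont2 a b e : 0 < e -> exists d, 0 < d /\
  forall a' b', Rabs (a' - a) < d -> Rabs (b' - b) < d -> Rabs (a' + b' - (a + b)) < e.
Proof.
  intros He. exists (e / 2); split; [lra|]. intros a' b' Ha Hb.
  pose proof (Rabs_triang (a' - a) (b' - b)).
  replace (a' - a + (b' - b)) with (a' + b' - (a + b)) in H by ring. lra.
Qed.

(* Modulus [min 1 (e / 2M)] with [M = |a| + |b| + 1], since [a'b' - ab = (a'-a)b' + a(b'-b)]. *)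
Lemma Rmult_cont2 a b e : 0 < e -> exists d, 0 < d /\
  forall a' b', Rabs (a' - a) < d -> Rabs (b' - b) < d -> Rabs (a' * b' - a * b) < e.
Proof.
  intros He. set (M := Rabs a + Rabs b + 1).
  assert (HM : 0 < M) by (unfold M; pose proof (Rabs_pos a); pose proof (Rabs_pos b); lra).
  exists (Rmin 1 (e / (2 * M))); split.
  { apply Rmin_pos; [lra|]. apply Rdiv_lt_0_compat; lra. }
  intros a' b' Ha Hb. pose proof (Rmin_l 1 (e / (2 * M))); pose proof (Rmin_r 1 (e / (2 * M))).
  replace (a' * b' - a * b) with ((a' - a) * b' + a * (b' - b)) by ring.
  eapply Rle_lt_trans; [apply Rabs_triang|]. rewrite !Rabs_mult.
  assert (Hb' : Rabs b' <= M).
  { pose proof (Rabs_triang (b' - b) b). replace (b' - b + b) with b' in H1 by ring.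
    unfold M; pose proof (Rabs_pos a); lra. }
  assert (Ha' : Rabs a <= M) by (unfold M; pose proof (Rabs_pos b); lra).
  assert (E : e / (2 * M) * M + M * (e / (2 * M)) = e) by (field; lra).
  assert (Rabs (a' - a) * Rabs b' <= e / (2 * M) * M)
    by (apply Rmult_le_compat; try apply Rabs_pos; lra).
  assert (Rabs a * Rabs (b' - b) < M * (e / (2 * M))).
  { apply Rle_lt_trans with (M * Rabs (b' - b)).
    - apply Rmult_le_compat_r; [apply Rabs_pos| lra].
    - apply Rmult_lt_compat_l; lra. }
  lra.
Qed.

Lemma Rmin_cont2 a b e : 0 < e -> exists d, 0 < d /\
  forall a' b', Rabs (a' - a) < d -> Rabs (b' - b) < d -> Rabs (Rmin a' b' - Rmin a b) < e.
Proof.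
  intros He; exists e; split; auto. intros a' b'.
  unfold Rmin; destruct (Rle_dec a' b'), (Rle_dec a b);
    unfold Rabs; repeat destruct Rcase_abs; lra.
Qed.

Lemma Rmax_cont2 a b e : 0 < e -> exists d, 0 < d /\
  forall a' b', Rabs (a' - a) < d -> Rabs (b' - b) < d -> Rabs (Rmax a' b' - Rmax a b) < e.
Proof.
  intros He; exists e; split; auto. intros a' b'.
  unfold Rmax; destruct (Rle_dec a' b'), (Rle_dec a b);
    unfold Rabs; repeat destruct Rcase_abs; lra.
Qed.

Lemma rcont2_plus f g : rcont2 f -> rcont2 g -> rcont2 (fun s t => f s t + g s t).
Proof. apply (rcont2_combine Rplus), Rplus_cont2. Qed.

Lemma rcont2_mult f g : rcont2 f -> rcont2 g -> rcont2 (fun s t => f s t * g s t).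
Proof. apply (rcont2_combine Rmult), Rmult_cont2. Qed.

Lemma rcont2_min f g : rcont2 f -> rcont2 g -> rcont2 (fun s t => Rmin (f s t) (g s t)).
Proof. apply (rcont2_combine Rmin), Rmin_cont2. Qed.

Lemma rcont2_max f g : rcont2 f -> rcont2 g -> rcont2 (fun s t => Rmax (f s t) (g s t)).
Proof. apply (rcont2_combine Rmax), Rmax_cont2. Qed.

Lemma rcont2_minus f g : rcont2 f -> rcont2 g -> rcont2 (fun s t => f s t - g s t).
Proof.
  apply (rcont2_combine Rminus). intros a b e He.
  destruct (Rplus_cont2 a (- b) e He) as [d [Hd H]]. exists d; split; auto.
  intros a' b' Ha Hb. apply (H a' (- b')); auto.
  replace (- b' - - b) with (- (b' - b)) by ring. rewrite Rabs_Ropp; auto.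
Qed.

Definition clamp (x : R) := Rmax 0 (Rmin 1 x).

Lemma clamp_in01 x : in01 (clamp x).
Proof. unfold clamp, in01, Rmax, Rmin; repeat destruct Rle_dec; lra. Qed.

Lemma clamp_id x : in01 x -> clamp x = x.
Proof. unfold clamp, in01, Rmax, Rmin; repeat destruct Rle_dec; lra. Qed.

Lemma rcont2_clamp f : rcont2 f -> rcont2 (fun s t => clamp (f s t)).
Proof. intros; apply rcont2_max, rcont2_min; auto; apply rcont2_const. Qed.

Ltac rcont2_tac := solve [repeat first
  [ apply rcont2_clamp | apply rcont2_minus | apply rcont2_plus | apply rcont2_mult
  | apply rcont2_min | apply rcont2_max | apply rcont2_fst | apply rcont2_snd
  | apply rcont2_const ] ].

Definition cont2 (Z : space) (H : R -> R -> Z) :=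
  cont (prod_space Iu Iu) Z (fun st => H (proj1_sig (fst st)) (proj1_sig (snd st))).

Lemma cont2_comp (Z : space) (H : R -> R -> Z) phi psi : cont2 Z H -> rcont2 phi -> rcont2 psi ->
  (forall s t, in01 s -> in01 t -> in01 (phi s t) /\ in01 (psi s t)) ->
  cont2 Z (fun s t => H (phi s t) (psi s t)).
Proof.
  intros HH Hphi Hpsi Hin V HV. apply open_local.
  intros [[s hs] [t ht]] Vx; simpl in Vx.
  destruct (Hin s t hs ht) as [i1 i2].
  destruct (HH V HV (exist _ _ i1, exist _ _ i2) Vx) as [A [B [HA [HB [Ap [Bp Hbox]]]]]].
  destruct (Iu_open_ball A _ HA Ap) as [e1 [He1 E1]].
  destruct (Iu_open_ball B _ HB Bp) as [e2 [He2 E2]]. simpl in E1, E2.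
  destruct (Hphi s t hs ht e1 He1) as [d1 [Hd1 D1]].
  destruct (Hpsi s t hs ht e2 He2) as [d2 [Hd2 D2]].
  set (d := Rmin d1 d2).
  assert (0 < d) by (apply Rmin_pos; auto).
  pose proof (Rmin_l d1 d2); pose proof (Rmin_r d1 d2).
  exists (fun p : prod_space Iu Iu =>
    Rabs (proj1_sig (fst p) - s) < d /\ Rabs (proj1_sig (snd p) - t) < d).
  split; [apply (open_box Iu Iu (fun x => Rabs (proj1_sig x - s) < d)
     (fun x => Rabs (proj1_sig x - t) < d)); apply Iu_ball_open|].
  split; [simpl; rewrite !Rminus_diag, Rabs_R0; auto|].
  intros [[s' hs'] [t' ht']] [Hs Ht]; simpl in Hs, Ht |- *.
  destruct (Hin s' t' hs' ht') as [j1 j2].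
  apply (Hbox (exist _ _ j1) (exist _ _ j2)).
  - apply E1; simpl. apply D1; auto; unfold d in *; lra.
  - apply E2; simpl. apply D2; auto; unfold d in *; lra.
Qed.

Ltac square_side := try assumption; try rcont2_tac;
  try solve [unfold in01; intros; lra]; try solve [intros; split; try apply clamp_in01; auto].

Lemma cont2_ext (Z : space) (A B : R -> R -> Z) : cont2 Z A ->
  (forall s t, in01 s -> in01 t -> A s t = B s t) -> cont2 Z B.
Proof.
  intros HA E. unfold cont2.
  replace (fun st : prod_space Iu Iu => B (proj1_sig (fst st)) (proj1_sig (snd st)))
    with (fun st : prod_space Iu Iu => A (proj1_sig (fst st)) (proj1_sig (snd st))); auto.
  extensionality st. destruct st as [[s hs] [t ht]]; simpl; auto.
Qed.

Lemma cont2_swap (Z : space) (A : R -> R -> Z) : cont2 Z A -> cont2 Z (fun s t => A t s).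
Proof. intros HA. apply (cont2_comp Z A (fun _ t => t) (fun s _ => s)); square_side. Qed.

Lemma cont2_paste (Z : space) (A B : R -> R -> Z) : cont2 Z A -> cont2 Z B ->
  (forall t, in01 t -> A (1/2) t = B (1/2) t) ->
  cont2 Z (fun s t => if Rle_dec s (1/2) then A s t else B s t).
Proof.
  intros HA HB E V HV. apply open_local.
  intros [[s hs] [t ht]] Vx; simpl in Vx.
  set (VA := fun p : prod_space Iu Iu => V (A (proj1_sig (fst p)) (proj1_sig (snd p)))).
  set (VB := fun p : prod_space Iu Iu => V (B (proj1_sig (fst p)) (proj1_sig (snd p)))).
  assert (OA : open VA) by exact (HA V HV). assert (OB : open VB) by exact (HB V HV).
  assert (half : forall P : Iu -> Prop, open P -> open (s := prod_space Iu Iu) (fun p => P (fst p)))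
    by (intros P HP; apply (open_ext (prod_space Iu Iu) (fun p => P (fst p) /\ True)); [|tauto];
        apply (open_box Iu Iu P (fun _ => True)); [exact HP|apply open_full]).
  destruct (total_order_T s (1/2)) as [[Hlt|Heq]|Hgt].
  - exists (fun p => VA p /\ proj1_sig (fst p) < 1/2).
    split; [apply open_inter; [exact OA|apply (half (fun x => proj1_sig x < 1/2)), Iu_lt_open]|].
    split; [unfold VA; simpl; destruct (Rle_dec s (1/2)); [auto|lra]|].
    intros [[s' hs'] [t' ht']] [H1 H2]; simpl in *. destruct (Rle_dec s' (1/2)); [auto|lra].
  - subst s. exists (fun p => VA p /\ VB p).
    split; [apply open_inter; auto|]. unfold VA, VB; simpl.
    destruct (Rle_dec (1/2) (1/2)); [|lra]. split; [rewrite <- E; auto|].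
    intros [[s' hs'] [t' ht']] [H1 H2]; simpl in *. destruct (Rle_dec s' (1/2)); auto.
  - exists (fun p => VB p /\ 1/2 < proj1_sig (fst p)).
    split; [apply open_inter; [exact OB|apply (half (fun x => 1/2 < proj1_sig x)), Iu_gt_open]|].
    split; [unfold VB; simpl; destruct (Rle_dec s (1/2)); [lra|auto]|].
    intros [[s' hs'] [t' ht']] [H1 H2]; simpl in *. destruct (Rle_dec s' (1/2)); [lra|auto].
Qed.

(* Clamping makes both halves defined and continuous on the whole square. *)
Lemma cont2_paste_halves (Z : space) (A B : R -> R -> Z) : cont2 Z A -> cont2 Z B ->
  (forall t, in01 t -> A 1 t = B 0 t) ->
  cont2 Z (fun s t => if Rle_dec s (1/2) then A (2*s) t else B (2*s-1) t).
Proof.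
  intros HA HB E.
  apply (cont2_ext Z (fun s t => if Rle_dec s (1/2) then A (clamp (2*s)) t
                                 else B (clamp (2*s-1)) t)).
  - apply cont2_paste.
    + apply (cont2_comp Z A (fun s _ => clamp (2*s)) (fun _ t => t)); square_side.
    + apply (cont2_comp Z B (fun s _ => clamp (2*s-1)) (fun _ t => t)); square_side.
    + intros t ht. rewrite !clamp_id; unfold in01; try lra.
      replace (2 * (1/2)) with 1 by field. replace (1 - 1) with 0 by ring. auto.
  - intros s t hs ht. unfold in01 in *.
    destruct Rle_dec; rewrite clamp_id; unfold in01; auto; lra.
Qed.

(** * Paths and homotopies of paths *)

Lemma is_path_cont2 Z p : is_path Z p -> cont2 Z (fun s _ => p s).
Proof. intros Hp. exact (cont_comp (prod_space Iu Iu) Iu Z fst _ (cont_fst Iu Iu) Hp). Qed.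

Definition Iu0 : Iu := exist _ 0 (conj (Rle_refl 0) Rle_0_1).

Lemma cont2_is_path Z p : cont2 Z (fun s _ => p s) -> is_path Z p.
Proof.
  intros H V HV. apply open_local. intros x Vx.
  destruct (H V HV (x, Iu0) Vx) as [A [B [HA [HB [Ax [B0 Hb]]]]]].
  exists A; split; auto; split; auto. intros y Ay. exact (Hb y Iu0 Ay B0).
Qed.

Lemma cont2_path_reparam Z p (theta : R -> R -> R) : is_path Z p -> rcont2 theta ->
  (forall s t, in01 s -> in01 t -> in01 (theta s t)) -> cont2 Z (fun s t => p (theta s t)).
Proof.
  intros Hp Ht Hin. apply (cont2_comp Z (fun a _ => p a) theta (fun _ t => t)); auto.
  - apply is_path_cont2; auto.
  - apply rcont2_snd.
Qed.

Lemma is_path_const (Z : space) (c : Z) : is_path Z (fun _ => c).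
Proof. exact (cont_const Iu Z c). Qed.

Lemma is_path_map (Z W : space) (f : Z -> W) p :
  cont Z W f -> is_path Z p -> is_path W (fun s => f (p s)).
Proof. intros Hf Hp. exact (cont_comp _ _ _ _ _ Hp Hf). Qed.

Lemma is_path_pair (Z W : space) (p : R -> Z) (q : R -> W) : is_path Z p -> is_path W q ->
  is_path (prod_space Z W) (fun s => (p s, q s)).
Proof. intros Hp Hq. exact (cont_pair _ _ _ _ _ Hp Hq). Qed.

Lemma is_path_rev Z p : is_path Z p -> is_path Z (rev_path p).
Proof.
  intros Hp. apply cont2_is_path, (cont2_path_reparam Z p (fun s _ => 1 - s)); square_side.
Qed.

Lemma is_path_concat Z p q : is_path Z p -> is_path Z q -> p 1 = q 0 -> is_path Z (concat p q).
Proof.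
  intros Hp Hq E. apply cont2_is_path.
  exact (cont2_paste_halves Z (fun s _ => p s) (fun s _ => q s)
           (is_path_cont2 Z p Hp) (is_path_cont2 Z q Hq) (fun _ _ => E)).
Qed.

Definition path_between (Z : space) (p : R -> Z) a b := is_path Z p /\ p 0 = a /\ p 1 = b.

Lemma concat_0 {X : Type} (p q : R -> X) : concat p q 0 = p 0.
Proof. unfold concat; destruct Rle_dec; [|lra]. f_equal; ring. Qed.

Lemma concat_1 {X : Type} (p q : R -> X) : concat p q 1 = q 1.
Proof. unfold concat; destruct Rle_dec; [lra|]. f_equal; ring. Qed.

Lemma path_between_concat Z p q a b c :
  path_between Z p a b -> path_between Z q b c -> path_between Z (concat p q) a c.
Proof.
  intros [Hp [p0 p1]] [Hq [q0 q1]].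
  split; [apply is_path_concat; [auto|auto|congruence]|].
  rewrite concat_0, concat_1; auto.
Qed.

Lemma path_between_rev Z p a b : path_between Z p a b -> path_between Z (rev_path p) b a.
Proof.
  intros [Hp [p0 p1]]. split; [apply is_path_rev; auto|]. unfold rev_path.
  replace (1 - 0) with 1 by ring; replace (1 - 1) with 0 by ring; auto.
Qed.

Lemma path_between_const (Z : space) (a : Z) : path_between Z (fun _ => a) a a.
Proof. split; auto; apply is_path_const. Qed.

Lemma path_between_map (Z W : space) (f : Z -> W) p a b :
  cont Z W f -> path_between Z p a b -> path_between W (fun s => f (p s)) (f a) (f b).
Proof. intros Hf [Hp [p0 p1]]; split; [apply is_path_map; auto|]; subst; auto. Qed.

Lemma path_between_is_path Z p a b : path_between Z p a b -> is_path Z p.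
Proof. intros [H _]; exact H. Qed.

#[local] Hint Resolve path_between_concat path_between_rev path_between_const
  path_between_is_path : paths.

Lemma concat_ext {X : Type} (p p' q q' : R -> X) : (forall s, in01 s -> p s = p' s) ->
  (forall s, in01 s -> q s = q' s) -> forall s, in01 s -> concat p q s = concat p' q' s.
Proof.
  intros E1 E2 s hs; unfold concat, in01 in *.
  destruct Rle_dec; [apply E1|apply E2]; unfold in01; lra.
Qed.

Lemma rev_path_involutive {X : Type} (p : R -> X) s : rev_path (rev_path p) s = p s.
Proof. unfold rev_path; f_equal; ring. Qed.

Lemma map_concat {X Y : Type} (f : X -> Y) p q s :
  f (concat p q s) = concat (fun t => f (p t)) (fun t => f (q t)) s.
Proof. unfold concat; destruct Rle_dec; auto. Qed.

Lemma rev_path_concat {X : Type} (q r : R -> X) : q 1 = r 0 -> forall s,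
  rev_path (concat q r) s = concat (rev_path r) (rev_path q) s.
Proof.
  intros E s. unfold rev_path, concat. destruct (Rle_dec (1-s) (1/2)), (Rle_dec s (1/2)).
  - replace (2*(1-s)) with 1 by lra. replace (1 - 2*s) with 0 by lra. auto.
  - f_equal; ring.
  - f_equal; ring.
  - lra.
Qed.

Local Notation htp := path_homotopic.

Lemma in01_0 : in01 0. Proof. unfold in01; lra. Qed.
Lemma in01_1 : in01 1. Proof. unfold in01; lra. Qed.

Lemma htp_endpoints Z p q : htp Z p q -> p 0 = q 0 /\ p 1 = q 1.
Proof.
  intros [H [_ [E1 E2]]].
  destruct (E1 0 in01_0), (E1 1 in01_1), (E2 0 in01_0), (E2 1 in01_1). split; congruence.
Qed.

Lemma htp_ext Z p q p' q' : htp Z p q -> (forall s, in01 s -> p s = p' s) ->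
  (forall s, in01 s -> q s = q' s) -> htp Z p' q'.
Proof.
  intros [H [HC [E1 E2]]] Ep Eq.
  exists H; split; auto; split.
  - intros s hs; rewrite <- Ep, <- Eq; auto.
  - intros t ht; rewrite <- Ep, <- Ep; auto; [apply in01_1|apply in01_0].
Qed.

Lemma htp_refl Z p : is_path Z p -> htp Z p p.
Proof. intros Hp. exists (fun s _ => p s). split; [apply is_path_cont2; auto|]. split; auto. Qed.

Lemma htp_sym Z p q : htp Z p q -> htp Z q p.
Proof.
  intros Hh. destruct (htp_endpoints Z p q Hh) as [e0 e1].
  destruct Hh as [H [HC [E1 E2]]].
  exists (fun s t => H s (1 - t)). split.
  - apply (cont2_comp Z H (fun s _ => s) (fun _ t => 1 - t)); square_side.
  - split; intros s hs.
    + replace (1 - 0) with 1 by ring. replace (1 - 1) with 0 by ring. split; apply E1; auto.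
    + rewrite <- e0, <- e1. apply E2; unfold in01 in *; lra.
Qed.

Lemma htp_trans Z p q r : htp Z p q -> htp Z q r -> htp Z p r.
Proof.
  intros H1 H2. destruct (htp_endpoints Z p q H1) as [e0 e1].
  destruct H1 as [F [FC [F1 F2]]], H2 as [G [GC [G1 G2]]].
  exists (fun s t => if Rle_dec t (1/2) then F s (2*t) else G s (2*t-1)). split.
  - apply (cont2_swap Z (fun t s => if Rle_dec t (1/2) then F s (2*t) else G s (2*t-1))).
    apply (cont2_paste_halves Z (fun t s => F s t) (fun t s => G s t));
      try apply cont2_swap; auto.
    intros s hs. destruct (F1 s hs), (G1 s hs). congruence.
  - split.
    + intros s hs. destruct (Rle_dec 0 (1/2)); [|lra]. destruct (Rle_dec 1 (1/2)); [lra|].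
      replace (2*0) with 0 by ring. replace (2*1-1) with 1 by ring.
      split; [apply F1|apply G1]; auto.
    + intros t ht. unfold in01 in *. destruct Rle_dec.
      * apply F2; unfold in01; lra.
      * rewrite e0, e1. apply G2; unfold in01; lra.
Qed.

Lemma htp_map (Z W : space) (f : Z -> W) p q : cont Z W f -> htp Z p q ->
  htp W (fun s => f (p s)) (fun s => f (q s)).
Proof.
  intros Hf [H [HC [E1 E2]]]. exists (fun s t => f (H s t)). split.
  - exact (cont_comp _ _ _ _ _ HC Hf).
  - split; intros s hs; [destruct (E1 s hs)|destruct (E2 s hs)]; split; congruence.
Qed.

Lemma htp_pair (Z W : space) (p q : R -> Z) (p' q' : R -> W) : htp Z p q -> htp W p' q' ->
  htp (prod_space Z W) (fun s => (p s, p' s)) (fun s => (q s, q' s)).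
Proof.
  intros [F [FC [F1 F2]]] [G [GC [G1 G2]]]. exists (fun s t => (F s t, G s t)). split.
  - exact (cont_pair _ _ _ _ _ FC GC).
  - split; intros s hs; [destruct (F1 s hs), (G1 s hs)|destruct (F2 s hs), (G2 s hs)];
      split; congruence.
Qed.

Lemma htp_rev Z p q : htp Z p q -> htp Z (rev_path p) (rev_path q).
Proof.
  intros [H [HC [E1 E2]]]. exists (fun s t => H (1 - s) t). split.
  - apply (cont2_comp Z H (fun s _ => 1 - s) (fun _ t => t)); square_side.
  - unfold rev_path. split.
    + intros s hs; apply E1; unfold in01 in *; lra.
    + intros t ht. replace (1 - 0) with 1 by ring. replace (1 - 1) with 0 by ring.
      destruct (E2 t ht); split; auto.
Qed.

Lemma htp_concat Z p p' q q' : htp Z p p' -> htp Z q q' -> p 1 = q 0 ->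
  htp Z (concat p q) (concat p' q').
Proof.
  intros H1 H2 E. destruct H1 as [F [FC [F1 F2]]], H2 as [G [GC [G1 G2]]].
  exists (fun s t => if Rle_dec s (1/2) then F (2*s) t else G (2*s-1) t). split.
  - apply (cont2_paste_halves Z F G FC GC).
    intros t ht. destruct (F2 t ht), (G2 t ht). congruence.
  - unfold concat. split.
    + intros s hs. unfold in01 in *. destruct Rle_dec; [apply F1|apply G1]; unfold in01; lra.
    + intros t ht. destruct (Rle_dec 0 (1/2)); [|lra]. destruct (Rle_dec 1 (1/2)); [lra|].
      replace (2*0) with 0 by ring. replace (2*1-1) with 1 by ring.
      split; [apply F2|apply G2]; auto.
Qed.

Lemma htp_concat_l Z p p' q a b c : path_between Z p a b -> path_between Z q b c ->
  htp Z p p' -> htp Z (concat p q) (concat p' q).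
Proof.
  intros [_ [_ p1]] [Hq [q0 _]] H. apply htp_concat; [auto|apply htp_refl; auto|congruence].
Qed.

Lemma htp_concat_r Z p q q' a b c : path_between Z p a b -> path_between Z q b c ->
  htp Z q q' -> htp Z (concat p q) (concat p q').
Proof.
  intros [Hp [_ p1]] [_ [q0 _]] H. apply htp_concat; [apply htp_refl; auto|auto|congruence].
Qed.

Lemma htp_reparam Z p theta a b : is_path Z p -> rcont2 theta ->
  (forall s t, in01 s -> in01 t -> in01 (theta s t)) ->
  (forall t, in01 t -> theta 0 t = theta 0 0 /\ theta 1 t = theta 1 0) ->
  (forall s, in01 s -> a s = p (theta s 0)) -> (forall s, in01 s -> b s = p (theta s 1)) ->
  htp Z a b.
Proof.
  intros Hp Ht Hin E Ea Eb.
  exists (fun s t => p (theta s t)). split; [apply cont2_path_reparam; auto|].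
  split.
  - intros s hs; rewrite Ea, Eb; auto.
  - intros t ht; destruct (E t ht) as [A B].
    rewrite Ea, Ea, A, B; auto; [apply in01_1|apply in01_0].
Qed.

Lemma htp_reparam_path Z p (phi : R -> R) a : is_path Z p -> rcont2 (fun s _ => phi s) ->
  (forall s, in01 s -> in01 (phi s)) -> phi 0 = 0 -> phi 1 = 1 ->
  (forall s, in01 s -> a s = p (phi s)) -> htp Z a p.
Proof.
  intros Hp Hphi Hin E0 E1 Ea.
  apply (htp_reparam Z p (fun s t => (1-t) * phi s + t * s)); auto.
  - apply rcont2_plus; apply rcont2_mult; auto; rcont2_tac.
  - intros s t hs ht. specialize (Hin s hs). unfold in01 in *; nra.
  - intros t ht. rewrite E0, E1. split; ring.
  - intros s hs. rewrite Ea; auto. f_equal; ring.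
  - intros s hs. f_equal; ring.
Qed.

(** * The fundamental groupoid laws *)

Ltac Rle_cases := repeat match goal with
  | |- context [Rle_dec ?a ?b] => destruct (Rle_dec a b)
  | _ : context [Rle_dec ?a ?b] |- _ => destruct (Rle_dec a b) end;
  try solve [exfalso; lra]; try solve [f_equal; lra]; try reflexivity.

(* [(p q) r] runs through [0, 1/4, 1/2, 1] where [p (q r)] runs through [0, 1/2, 3/4, 1]. *)
Definition assoc_reparam s := Rmin (2*s) (Rmin (s + 1/4) ((s+1)/2)).

Lemma htp_concat_assoc Z p q r a b c d :
  path_between Z p a b -> path_between Z q b c -> path_between Z r c d ->
  htp Z (concat (concat p q) r) (concat p (concat q r)).
Proof.
  intros Hp Hq Hr.
  apply (htp_reparam_path Z _ assoc_reparam); unfold assoc_reparam.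
  - eauto 10 with paths.
  - rcont2_tac.
  - intros s hs; unfold in01 in *; unfold Rmin; Rle_cases; lra.
  - unfold Rmin; Rle_cases; lra.
  - unfold Rmin; Rle_cases; lra.
  - intros s hs. unfold concat, Rmin, in01 in *. Rle_cases.
Qed.

Lemma htp_concat_const_l Z p a b : path_between Z p a b -> htp Z (concat (fun _ => a) p) p.
Proof.
  intros [Hp [p0 p1]].
  apply (htp_reparam_path Z _ (fun s => Rmax 0 (2*s-1))); auto.
  - rcont2_tac.
  - intros s; unfold in01, Rmax; destruct Rle_dec; lra.
  - unfold Rmax; destruct Rle_dec; lra.
  - unfold Rmax; destruct Rle_dec; lra.
  - intros s hs. unfold concat, Rmax. Rle_cases; subst; f_equal; lra.
Qed.

Lemma htp_concat_const_r Z p a b : path_between Z p a b -> htp Z (concat p (fun _ => b)) p.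
Proof.
  intros [Hp [p0 p1]].
  apply (htp_reparam_path Z _ (fun s => Rmin 1 (2*s))); auto.
  - rcont2_tac.
  - intros s; unfold in01, Rmin; destruct Rle_dec; lra.
  - unfold Rmin; destruct Rle_dec; lra.
  - unfold Rmin; destruct Rle_dec; lra.
  - intros s hs. unfold concat, Rmin. Rle_cases; subst; f_equal; lra.
Qed.

Lemma htp_concat_rev_l Z p a b : path_between Z p a b -> htp Z (concat (rev_path p) p) (fun _ => b).
Proof.
  intros [Hp [p0 p1]].
  apply (htp_reparam Z p (fun s t => 1 - (1-t) * Rmin (2*s) (2-2*s))); auto.
  - rcont2_tac.
  - intros s t; unfold in01, Rmin; destruct Rle_dec; intros; nra.
  - intros t ht; unfold Rmin; Rle_cases; split; ring_simplify; lra.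
  - intros s hs; unfold concat, rev_path, Rmin; Rle_cases.
  - intros s hs. subst. f_equal; ring.
Qed.

Lemma htp_concat_rev_cancel_l Z q n a b c : path_between Z q a b -> path_between Z n b c ->
  htp Z (concat (rev_path q) (concat q n)) n.
Proof.
  intros Hq Hn.
  eapply htp_trans; [apply htp_sym; eapply htp_concat_assoc; eauto 10 with paths|].
  eapply htp_trans; [|eapply htp_concat_const_l; eauto].
  eapply htp_concat_l; eauto 10 with paths. eapply htp_concat_rev_l; eauto.
Qed.

Lemma htp_concat_rev_cancel_r Z n q a b c : path_between Z n a b -> path_between Z q c b ->
  htp Z (concat (concat n (rev_path q)) q) n.
Proof.
  intros Hn Hq.
  eapply htp_trans; [eapply htp_concat_assoc; eauto 10 with paths|].
  eapply htp_trans; [|eapply htp_concat_const_r; eauto].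
  eapply htp_concat_r; eauto 10 with paths. eapply htp_concat_rev_l; eauto.
Qed.

(** * Conjugation of loops by paths *)

Definition htp_conj Z m q n := htp Z m (concat q (concat n (rev_path q))).

Lemma htp_conj_refl Z q n a b : path_between Z q a b -> path_between Z n b b ->
  htp_conj Z (concat q (concat n (rev_path q))) q n.
Proof. intros; apply htp_refl; eauto 10 with paths. Qed.

Lemma htp_conj_unique Z l m q n : htp_conj Z l q n -> htp_conj Z m q n -> htp Z l m.
Proof. intros H1 H2; eapply htp_trans; [exact H1| apply htp_sym; exact H2]. Qed.

Lemma htp_conj_htp_loop Z m q n n' a b : path_between Z q a b -> path_between Z n b b ->
  htp Z n n' -> htp_conj Z m q n -> htp_conj Z m q n'.
Proof.
  intros Hq Hn Hnn H. eapply htp_trans; [exact H|].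
  eapply htp_concat_r; eauto 10 with paths. eapply htp_concat_l; eauto 10 with paths.
Qed.

Lemma htp_conj_htp_path Z m q q' n a b : path_between Z q a b -> path_between Z n b b ->
  htp Z q q' -> htp_conj Z m q n -> htp_conj Z m q' n.
Proof.
  intros Hq Hn Hqq H. eapply htp_trans; [exact H|].
  eapply htp_concat; [auto| |destruct Hq as [_ [_ <-]], Hn as [_ [<- _]]; symmetry; apply concat_0].
  eapply htp_concat_r; eauto 10 with paths. apply htp_rev; auto.
Qed.

Lemma htp_conj_const Z n a : path_between Z n a a -> htp_conj Z n (fun _ => a) n.
Proof.
  intros Hn. apply htp_sym.
  eapply htp_trans; [| eapply htp_concat_const_l; eauto].
  eapply htp_concat_r; eauto 10 with paths.
  eapply htp_ext; [eapply htp_concat_const_r; eauto| |]; auto.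
Qed.

Lemma htp_conj_map (Z W : space) (f : Z -> W) m q n : cont Z W f -> htp_conj Z m q n ->
  htp_conj W (fun s => f (m s)) (fun s => f (q s)) (fun s => f (n s)).
Proof.
  intros Hf H. eapply htp_ext; [apply htp_map; eauto| auto|].
  intros s hs. unfold concat, rev_path. Rle_cases.
Qed.

Lemma htp_conj_pair (Z W : space) m q n m' q' n' :
  htp_conj Z m q n -> htp_conj W m' q' n' ->
  htp_conj (prod_space Z W) (fun s => (m s, m' s)) (fun s => (q s, q' s))
    (fun s => (n s, n' s)).
Proof.
  intros H H'. eapply htp_ext; [exact (htp_pair Z W _ _ _ _ H H')| auto|].
  intros s hs. unfold concat, rev_path. Rle_cases.
Qed.

Lemma htp_conj_sym Z m q n a b : path_between Z q a b -> path_between Z m a a ->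
  path_between Z n b b -> htp_conj Z m q n -> htp_conj Z n (rev_path q) m.
Proof.
  intros Hq Hm Hn H. unfold htp_conj.
  apply (htp_ext Z n (concat (rev_path q) (concat m q))); [| auto |].
  2:{ intros s hs. apply concat_ext; [auto| |exact hs]. apply concat_ext; auto.
      intros; symmetry; apply rev_path_involutive. }
  apply htp_sym.
  assert (A : htp Z (concat m q) (concat q n)).
  { eapply htp_trans; [eapply htp_concat_l; [eauto|eauto|exact H]|].
    eapply htp_trans; [eapply htp_concat_assoc; eauto 10 with paths|].
    eapply htp_concat_r; eauto 10 with paths. eapply htp_concat_rev_cancel_r; eauto. }
  eapply htp_trans; [eapply htp_concat_r; [eauto 10 with paths|eauto 10 with paths|exact A]|].
  eapply htp_concat_rev_cancel_l; eauto.
Qed.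

Lemma htp_conj_trans Z m q n r o a b c : path_between Z q a b -> path_between Z r b c ->
  path_between Z m a a -> path_between Z n b b -> path_between Z o c c ->
  htp_conj Z m q n -> htp_conj Z n r o -> htp_conj Z m (concat q r) o.
Proof.
  intros Hq Hr Hm Hn Ho H1 H2. unfold htp_conj.
  assert (E : q 1 = r 0) by (destruct Hq as [_ [_ ?]], Hr as [_ [? _]]; congruence).
  apply (htp_ext Z m (concat (concat q r) (concat o (concat (rev_path r) (rev_path q)))));
    [| auto |].
  2:{ intros s hs. apply concat_ext; [auto| |exact hs]. apply concat_ext; auto.
      intros; symmetry; apply rev_path_concat; auto. }
  eapply htp_trans; [exact H1|].
  eapply htp_trans;
    [eapply htp_concat_r; [eauto|eauto 10 with paths|eapply htp_concat_l; [eauto|eauto 10 with paths|exact H2]]|].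
  apply htp_sym.
  eapply htp_trans; [eapply htp_concat_assoc; eauto 10 with paths|].
  eapply htp_concat_r; [eauto|eauto 10 with paths|].
  eapply htp_trans;
    [eapply htp_concat_r; [eauto|eauto 10 with paths|apply htp_sym; eapply htp_concat_assoc; eauto 10 with paths]|].
  apply htp_sym; eapply htp_concat_assoc; eauto 10 with paths.
Qed.

(** * Homotopy invariance of the fundamental group *)

(* The two boundary paths of a square, bottom-right and left-top, are homotopic: deform
   along the segments from [(1,0)] to [(0,1)]. *)
Lemma htp_square Z F : cont2 Z F ->
  htp Z (concat (fun s => F s 0) (fun t => F 1 t)) (concat (fun t => F 0 t) (fun s => F s 1)).
Proof.
  intros HF.
  exists (fun s u => if Rle_dec s (1/2) then F (2*s*(1-u)) (2*s*u)
                   else F ((1-u) + (2*s-1)*u) (u + (2*s-1)*(1-u))). split.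
  - apply (cont2_paste_halves Z (fun s u => F (s*(1-u)) (s*u))
                                (fun s u => F ((1-u) + s*u) (u + s*(1-u)))).
    + apply cont2_comp; square_side. intros s t hs ht; unfold in01 in *; split; nra.
    + apply cont2_comp; square_side. intros s t hs ht; unfold in01 in *; split; nra.
    + intros t ht. f_equal; ring.
  - unfold concat. split.
    + intros s hs. destruct Rle_dec; split; f_equal; ring.
    + intros t ht. destruct (Rle_dec 0 (1/2)); [|lra]. destruct (Rle_dec 1 (1/2)); [lra|].
      split; f_equal; ring.
Qed.

Definition pi1_inj_at (Z W : space) (f : Z -> W) x := forall l m,
  path_between Z l x x -> path_between Z m x x ->
  htp W (fun s => f (l s)) (fun s => f (m s)) -> htp Z l m.

Definition pi1_surj_at (Z W : space) (f : Z -> W) x := forall l',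
  path_between W l' (f x) (f x) -> exists l, path_between Z l x x /\ htp W (fun s => f (l s)) l'.

Lemma homotopy_track_path (X Y : space) (K : X -> R -> Y) x :
  cont (prod_space X Iu) Y (fun p => K (fst p) (proj1_sig (snd p))) -> is_path Y (K x).
Proof.
  intros HK.
  exact (cont_comp Iu (prod_space X Iu) Y (fun t : Iu => ((x, t) : prod_space X Iu)) _
           (cont_pair Iu X Iu _ _ (cont_const Iu X x) (cont_id Iu)) HK).
Qed.

(* A homotopy [K] from [h] to the identity conjugates every loop [l] at [x] to [h l], by the
   track of [x]; this is the square [K (l s) t]. *)
Lemma homotopy_to_id_conj (X : space) (K : X -> R -> X) (h : X -> X) x l :
  cont (prod_space X Iu) X (fun p => K (fst p) (proj1_sig (snd p))) ->
  (forall y, K y 0 = h y /\ K y 1 = y) -> path_between X l x x ->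
  htp_conj X l (rev_path (K x)) (fun s => h (l s)).
Proof.
  intros HK E Pl.
  assert (Pc : path_between X (K x) (h x) x)
    by (split; [apply (homotopy_track_path X X K x HK)|apply E]).
  destruct Pl as [Hl [l0 l1]].
  assert (HF : cont2 X (fun s t => K (l s) t)).
  { exact (cont_comp (prod_space Iu Iu) (prod_space X Iu) X
      (fun st : prod_space Iu Iu => ((l (proj1_sig (fst st)), snd st) : prod_space X Iu)) _
      (cont_pair _ X Iu _ _ (cont_comp _ _ _ _ _ (cont_fst Iu Iu) Hl) (cont_snd Iu Iu)) HK). }
  assert (Sq : htp X (concat (fun s => h (l s)) (K x)) (concat (K x) l)).
  { eapply htp_ext; [exact (htp_square X _ HF)| |];
      intros s hs; apply concat_ext; auto; intros; simpl;
      rewrite ?l0, ?l1; try apply E; reflexivity. }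
  assert (Pl : path_between X l x x) by (split; auto).
  assert (Phl : path_between X (fun s => h (l s)) (h x) (h x)).
  { replace (fun s => h (l s)) with (fun s => K (l s) 0)
      by (extensionality s; apply E).
    split; [|rewrite l0, l1; split; apply E].
    apply cont2_is_path, (cont2_comp X _ (fun s _ => s) (fun _ _ => 0) HF); square_side. }
  apply (htp_ext X l (concat (rev_path (K x)) (concat (fun s => h (l s)) (K x))));
    [| auto |].
  2:{ intros s hs. apply concat_ext; auto. apply concat_ext; auto.
      intros; symmetry; apply rev_path_involutive. }
  apply htp_sym.
  eapply htp_trans; [eapply htp_concat_r; [eauto 10 with paths|eauto 10 with paths|exact Sq]|].
  eapply htp_concat_rev_cancel_l; eauto.
Qed.

Section HomotopyInverse.
Variables (X Y : space) (f : X -> Y) (g : Y -> X).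
Hypotheses (Hf : cont X Y f) (Hg : cont Y X g)
  (Hgf : homotopic_maps X X (fun x => g (f x)) (fun x => x)).

Lemma homotopy_inverse_pi1_inj x : pi1_inj_at X Y f x.
Proof.
  destruct Hgf as [K [HK E]]. intros l m Pl Pm Hlm.
  assert (Pc : path_between X (K x) (g (f x)) x)
    by (split; [apply (homotopy_track_path X X K x HK)|apply E]).
  apply (htp_conj_unique X l m (rev_path (K x)) (fun s => g (f (l s)))).
  - exact (homotopy_to_id_conj X K _ x l HK E Pl).
  - eapply htp_conj_htp_loop; [eauto 10 with paths| | |exact (homotopy_to_id_conj X K _ x m HK E Pm)].
    + apply (path_between_map X X (fun x => g (f x))); [apply (cont_comp _ _ _ f g)|]; auto.
    + apply htp_sym. exact (htp_map _ _ g _ _ Hg Hlm).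
Qed.

Lemma homotopy_inverse_pi1_surj : (forall y, pi1_inj_at Y X g y) -> forall x, pi1_surj_at X Y f x.
Proof.
  destruct Hgf as [K [HK E]]. intros Ginj x l' Pl'.
  assert (Pc : path_between X (K x) (g (f x)) x)
    by (split; [apply (homotopy_track_path X X K x HK)|apply E]).
  assert (Pgl : path_between X (fun s => g (l' s)) (g (f x)) (g (f x)))
    by (apply path_between_map; auto).
  set (l := concat (rev_path (K x)) (concat (fun s => g (l' s)) (rev_path (rev_path (K x))))).
  assert (Pl : path_between X l x x) by (unfold l; eauto 10 with paths).
  exists l; split; auto.
  apply (Ginj (f x)); [apply path_between_map; auto| auto|].
  apply (htp_conj_unique X _ _ (rev_path (rev_path (K x))) l).
  - apply (htp_conj_sym X l _ _ x (g (f x))); eauto 10 with paths.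
    + apply (path_between_map X X (fun x => g (f x))); [apply (cont_comp _ _ _ f g)|]; auto.
    + exact (homotopy_to_id_conj X K _ x l HK E Pl).
  - apply (htp_conj_sym X l (rev_path (K x)) _ x (g (f x))); eauto 10 with paths.
    apply (htp_conj_refl X _ _ x (g (f x))); eauto 10 with paths.
Qed.

End HomotopyInverse.

Section ChangeOfBasepoint.
Variables (X Y : space) (f : X -> Y) (x0 : X).
Hypotheses (PC : path_connected X) (Hf : cont X Y f) (Hiso : pi1_iso X Y f x0).

(* Conjugation by a path [p] from [x0] to [x] identifies loops at [x] with loops at [x0],
   compatibly with [f]. *)
Lemma pi1_iso_inj_at x : pi1_inj_at X Y f x.
Proof.
  intros l m Pl Pm Hlm.
  destruct PC as [_ PCX]. destruct (PCX x0 x) as [p Pp]. fold (path_between X p x0 x) in Pp.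
  set (l0 := concat p (concat l (rev_path p))). set (m0 := concat p (concat m (rev_path p))).
  assert (Pl0 : path_between X l0 x0 x0) by (unfold l0; eauto 10 with paths).
  assert (Pm0 : path_between X m0 x0 x0) by (unfold m0; eauto 10 with paths).
  assert (H0 : htp X l0 m0).
  { apply (proj1 Hiso); [exact Pl0|exact Pm0|].
    apply (htp_conj_unique Y _ _ (fun s => f (p s)) (fun s => f (l s))).
    - apply htp_conj_map; auto. apply (htp_conj_refl X _ _ x0 x); auto.
    - eapply htp_conj_htp_loop; [apply path_between_map; eauto|apply path_between_map; eauto|
        apply htp_sym; exact Hlm|].
      apply htp_conj_map; auto. apply (htp_conj_refl X _ _ x0 x); auto. }
  apply (htp_conj_unique X l m (rev_path p) l0).
  - apply (htp_conj_sym X l0 p l x0 x); auto.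
    apply (htp_conj_refl X _ _ x0 x); auto.
  - eapply htp_conj_htp_loop; [eauto 10 with paths|eauto 10 with paths|apply htp_sym; exact H0|].
    apply (htp_conj_sym X m0 p m x0 x); auto.
    apply (htp_conj_refl X _ _ x0 x); auto.
Qed.

Lemma pi1_iso_surj_at x : pi1_surj_at X Y f x.
Proof.
  intros l' Pl'.
  destruct PC as [_ PCX]. destruct (PCX x0 x) as [p Pp]. fold (path_between X p x0 x) in Pp.
  assert (Pfp : path_between Y (fun s => f (p s)) (f x0) (f x)) by (apply path_between_map; auto).
  set (l0' := concat (fun s => f (p s)) (concat l' (rev_path (fun s => f (p s))))).
  assert (Pl0' : path_between Y l0' (f x0) (f x0)) by (unfold l0'; eauto 10 with paths).
  destruct (proj2 Hiso l0' Pl0') as [l0 [Pl0 Hl0]].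
  exists (concat (rev_path p) (concat l0 (rev_path (rev_path p)))).
  split; [eauto 10 with paths|].
  apply (htp_conj_unique Y _ _ (rev_path (fun s => f (p s))) l0').
  - eapply htp_conj_htp_loop; [eauto 10 with paths|apply path_between_map; eauto|exact Hl0|].
    apply (htp_conj_map X Y f _ (rev_path p)); auto.
    apply (htp_conj_refl X _ _ x x0); eauto 10 with paths.
  - apply (htp_conj_sym Y l0' _ l' (f x0) (f x)); auto.
    apply (htp_conj_refl Y _ _ (f x0) (f x)); auto.
Qed.

End ChangeOfBasepoint.

Lemma pi1_inj_conj (X Y : space) (f : X -> Y) m p n a b : cont X Y f -> pi1_inj_at X Y f a ->
  path_between X p a b -> path_between X m a a -> path_between X n b b ->
  htp_conj Y (fun s => f (m s)) (fun s => f (p s)) (fun s => f (n s)) -> htp_conj X m p n.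
Proof.
  intros Hf Inj Pp Pm Pn H. apply Inj; [auto|eauto 10 with paths|].
  eapply htp_ext; [exact H|auto|]. intros s hs. unfold concat, rev_path. Rle_cases.
Qed.

Lemma lift_path_htp (X Y : space) (f : X -> Y) b a q : path_connected X -> cont X Y f ->
  pi1_surj_at X Y f b -> path_between Y q (f b) (f a) ->
  exists p, path_between X p b a /\ htp Y (fun s => f (p s)) q.
Proof.
  intros [_ PC] Hf Sur Pq.
  destruct (PC b a) as [p0 Pp0]. fold (path_between X p0 b a) in Pp0.
  assert (Pfp : path_between Y (fun s => f (p0 s)) (f b) (f a)) by (apply path_between_map; auto).
  destruct (Sur (concat q (rev_path (fun s => f (p0 s))))) as [m [Pm Hm]];
    [eauto 10 with paths|].
  exists (concat m p0); split; [eauto 10 with paths|].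
  apply (htp_ext Y (concat (fun s => f (m s)) (fun s => f (p0 s))) q);
    [| intros; symmetry; apply map_concat | auto].
  eapply htp_trans; [eapply htp_concat_l; [apply path_between_map; eauto|eauto|exact Hm]|].
  eapply htp_concat_rev_cancel_r; eauto.
Qed.

(** * Pulling back D-sets *)

Lemma cont_prod_map (X Y : space) (f : X -> Y) : cont X Y f ->
  cont (prod_space X X) (prod_space Y Y) (fun p => (f (fst p), f (snd p))).
Proof. intros Hf; apply cont_pair; apply (cont_comp _ X Y); auto; [apply cont_fst|apply cont_snd]. Qed.

Section DSetPreimage.
Variables (X Y : space) (f : X -> Y).
Hypotheses (PC : path_connected X) (Hf : cont X Y f)
  (Inj : forall x, pi1_inj_at X Y f x) (Sur : forall x, pi1_surj_at X Y f x).

(* Projecting [g' (d, d) g'^-1] shows that [f l_2] is conjugate to [f l_1] by [g'_2 g'_1^-1],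
   hence by [f g2]; injectivity of [f_*] lifts this to [l_2 ~ g2 l_1 g2^-1] in [X]. *)
Lemma conj_diagonal_preimage (l : R -> prod_space X X) (g' : R -> prod_space Y Y) g2 d a b z :
  is_loop (prod_space X X) (a, b) l -> path_between (prod_space Y Y) g' (f a, f b) (z, z) ->
  path_between X g2 b a -> path_between Y d z z ->
  htp Y (fun s => f (g2 s)) (concat (fun t => snd (g' t)) (rev_path (fun t => fst (g' t)))) ->
  htp_conj (prod_space Y Y) (fun s => (f (fst (l s)), f (snd (l s)))) g'
    (fun t => (d t, d t)) ->
  htp_conj (prod_space X X) l (fun t => (a, g2 t)) (fun t => (fst (l t), fst (l t))).
Proof.
  intros [Hl [l0 l1]] Pg' Pg2 Pd Hg2 Hlg.
  set (l1' := fun t => fst (l t)). set (l2' := fun t => snd (l t)).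
  set (g1' := fun t => fst (g' t)). set (g2' := fun t => snd (g' t)).
  assert (Pl1 : path_between X l1' a a).
  { split; [exact (cont_comp _ _ _ _ _ Hl (cont_fst X X))|]. unfold l1'; rewrite l0, l1; auto. }
  assert (Pl2 : path_between X l2' b b).
  { split; [exact (cont_comp _ _ _ _ _ Hl (cont_snd X X))|]. unfold l2'; rewrite l0, l1; auto. }
  assert (Pg1' : path_between Y g1' (f a) z) by exact (path_between_map (prod_space Y Y) Y (@fst Y Y) g' _ _ (cont_fst Y Y) Pg').
  assert (Pg2' : path_between Y g2' (f b) z) by exact (path_between_map (prod_space Y Y) Y (@snd Y Y) g' _ _ (cont_snd Y Y) Pg').
  assert (Pfl1 : path_between Y (fun s => f (l1' s)) (f a) (f a)) by (apply path_between_map; auto).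
  assert (Pfl2 : path_between Y (fun s => f (l2' s)) (f b) (f b)) by (apply path_between_map; auto).
  assert (C1 : htp_conj Y (fun s => f (l1' s)) g1' d)
    by exact (htp_conj_map (prod_space Y Y) Y (@fst Y Y) _ _ _ (cont_fst Y Y) Hlg).
  assert (C2 : htp_conj Y (fun s => f (l2' s)) g2' d)
    by exact (htp_conj_map (prod_space Y Y) Y (@snd Y Y) _ _ _ (cont_snd Y Y) Hlg).
  assert (C3 : htp_conj Y (fun s => f (l2' s)) (fun s => f (g2 s)) (fun s => f (l1' s))).
  { apply (htp_conj_htp_path Y _ (concat g2' (rev_path g1')) _ _ (f b) (f a));
      [eauto 10 with paths|exact Pfl1|apply htp_sym; exact Hg2|].
    apply (htp_conj_trans Y _ _ d _ _ (f b) z (f a)); eauto 10 with paths.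
    apply (htp_conj_sym Y _ _ _ (f a) z); auto. }
  assert (C4 : htp_conj X l2' g2 l1') by (apply (pi1_inj_conj X Y f _ _ _ b a); auto).
  eapply htp_ext; [exact (htp_conj_pair X X _ _ _ _ _ _ (htp_conj_const X l1' a Pl1) C4)| |].
  - intros s hs. unfold l1', l2'. destruct (l s); reflexivity.
  - intros s hs. reflexivity.
Qed.

Lemma D_set_preimage (V : prod_space Y Y -> Prop) :
  D_set Y V -> D_set X (fun p => V (f (fst p), f (snd p))).
Proof.
  intros HD [a b] Uu. destruct (HD _ Uu) as [z [g' [Hg' [g'0 [g'1 Hloops]]]]].
  assert (Pg' : path_between (prod_space Y Y) g' (f a, f b) (z, z)) by (split; auto).
  assert (Pg1 := path_between_map (prod_space Y Y) Y (@fst Y Y) g' _ _ (cont_fst Y Y) Pg').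
  assert (Pg2 := path_between_map (prod_space Y Y) Y (@snd Y Y) g' _ _ (cont_snd Y Y) Pg'). simpl in Pg1, Pg2.
  destruct (lift_path_htp X Y f b a (concat (fun t => snd (g' t)) (rev_path (fun t => fst (g' t))))
              PC Hf (Sur b)) as [g2 [Pg2x Hg2]]; [eauto 10 with paths|].
  exists a, (fun t => (a, g2 t)).
  destruct Pg2x as [Hg2p [g20 g21]].
  split; [exact (is_path_pair X X _ _ (is_path_const X a) Hg2p)|].
  split; [rewrite g20; auto|]. split; [rewrite g21; auto|].
  intros l Pl Ul.
  destruct (Hloops (fun s => (f (fst (l s)), f (snd (l s))))) as [d [Pd Hh]].
  { destruct Pl as [Hl [l0 l1]].
    split; [exact (cont_comp _ _ _ _ _ Hl (cont_prod_map X Y f Hf))|]. rewrite l0, l1; auto. }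
  { intros t ht; apply Ul; auto. }
  exists (fun t => fst (l t)). split.
  - destruct Pl as [Hl [l0 l1]].
    split; [exact (cont_comp _ _ _ _ _ Hl (cont_fst X X))|]. rewrite l0, l1; auto.
  - apply (conj_diagonal_preimage l g' g2 d a b z); auto. split; auto.
Qed.

End DSetPreimage.

Lemma TCD_le_preimage (X Y : space) (f : X -> Y) n : path_connected X -> cont X Y f ->
  (forall x, pi1_inj_at X Y f x) -> (forall x, pi1_surj_at X Y f x) -> TCD_le Y n -> TCD_le X n.
Proof.
  intros PC Hf Inj Sur [V [HV Cov]].
  exists (fun i p => V i (f (fst p), f (snd p))). split.
  - intros i hi. destruct (HV i hi) as [Ho HD].
    split; [exact (cont_prod_map X Y f Hf _ Ho)|exact (D_set_preimage X Y f PC Hf Inj Sur _ HD)].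
  - intros p. exact (Cov (f (fst p), f (snd p))).
Qed.

Lemma TCD_le_TCD Z n : TCD_le Z n -> exists m, TCD Z m /\ (m <= n)%nat.
Proof.
  induction n as [n IH] using lt_wf_ind. intros Hn.
  destruct (classic (exists k, (k < n)%nat /\ TCD_le Z k)) as [[k [Hk Tk]]|Hno].
  - destruct (IH k Hk Tk) as [m [Tm Hm]]. exists m; split; auto. lia.
  - exists n; split; auto. split; auto. intros k Hk Tk. apply Hno; eauto.
Qed.

Lemma TCD_ext (X Y : space) : (forall k, TCD_le X k <-> TCD_le Y k) ->
  forall n, TCD X n <-> TCD Y n.
Proof.
  intros E n; unfold TCD; split; intros [A B]; split; try apply E; auto;
    intros k Hk C; apply (B k Hk); apply E; auto.
Qed.

Theorem mainTheorem5 :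
  (forall (X Y : space) (f : X -> Y) (x0 : X),
      path_connected X -> path_connected Y -> cont X Y f ->
      pi1_iso X Y f x0 ->
      forall n, TCD Y n -> exists m, TCD X m /\ (m <= n)%nat) /\
  (forall X Y : space,
      path_connected X -> path_connected Y -> homotopy_equivalent X Y ->
      forall n, TCD X n <-> TCD Y n).
Proof.
  split.
  - intros X Y f x0 PX _ Hf Hiso n [Tn _]. apply TCD_le_TCD.
    apply (TCD_le_preimage X Y f n PX Hf);
      [apply (pi1_iso_inj_at X Y f x0)|apply (pi1_iso_surj_at X Y f x0)|]; auto.
  - intros X Y PX PY [f [g [Hf [Hg [Hgf Hfg]]]]]. apply TCD_ext. intros k.
    assert (If := homotopy_inverse_pi1_inj X Y f g Hf Hg Hgf).
    assert (Ig := homotopy_inverse_pi1_inj Y X g f Hg Hf Hfg).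
    assert (Sf := homotopy_inverse_pi1_surj X Y f g Hf Hg Hgf Ig).
    assert (Sg := homotopy_inverse_pi1_surj Y X g f Hg Hf Hfg If).
    split; [apply (TCD_le_preimage Y X g)|apply (TCD_le_preimage X Y f)]; auto.
Qed.
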